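(* Let $p\in(0,1)$, $\alpha\in(0,1]$, $0\le h_1<\dots<h_N\le1$, and nonnegative weights $f_0^S(h_j),f_0^{NS}(h_j)$, $j=1,\dots,N$, each summing to $1$; set $f_0(h_j)=\alpha f_0^S(h_j)+(1-\alpha)f_0^{NS}(h_j)$ with $f_0(h_N)>0$, and $f_0([h_i,1])=\sum_{j\ge i}f_0(h_j)$. Let $m_0^{S,j}\in[-1,1]$ be given. Let $f^{NS,1},\dots,f^{NS,N}\in C([0,+\infty),P([-1,1]))$ (weak topology) with initial data $f_0^{NS,i}$, write $m^{NS,j}(t)=\int_{-1}^1w\,f^{NS,j}(t,dw)$, $$m(t)=\alpha\sum_{j}f_0^S(h_j)m_0^{S,j}+(1-\alpha)\sum_jf_0^{NS}(h_j)m^{NS,j}(t),\quad \beta_i(t)=\alpha\sum_{j\ge i}f_0^S(h_j)m_0^{S,j}+(1-\alpha)\sum_{j\ge i}f_0^{NS}(h_j)m^{NS,j}(t),$$ and assume that for all $i$, $t\ge0$ and $\phi\in C^1([-1,1])$, $$\int\phi\,df^{NS,i}(t)=\int\phi\,df_0^{NS,i}+\int_0^t\!\!\int_{-1}^1\phi'(w)\Big[p\big(m(s)-w\big)+(1-p)\big(\beta_i(s)-f_0([h_i,1])w\big)\Big]f^{NS,i}(s,dw)\,ds.$$ Let $A=(A_{ij})$ be the $N\times N$ matrix with $A_{ii}=(1-\alpha)f_0^{NS}(h_i)-\big(p+(1-p)f_0([h_i,1])\big)$ and $A_{ij}=(1-\alpha)\big[p+(1-p)1_{\{j\ge i\}}\big]f_0^{NS}(h_j)$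 for $i\ne j$, and $B=(B_1,\dots,B_N)^T$ with $B_i=\alpha\sum_{j=1}^Nm_0^{S,j}\big(p+(1-p)1_{\{j\ge i\}}\big)f_0^S(h_j)$. Then $A$ is invertible and, with $(m_\infty^{NS,1},\dots,m_\infty^{NS,N})^T=-A^{-1}B$, we have $f^{NS,i}(t)\to\delta_{m_\infty^{NS,i}}$ weakly as $t\to+\infty$ for every $i=1,\dots,N$.
   Context: $P([-1,1])$ is the set of Borel probability measures on $[-1,1]$; $\delta_x$ is the Dirac mass at $x$. Interpretation: $f^{NS,i}(t)$ is the opinion distribution of non-stubborn individuals at hierarchy level $h_i$, $\alpha$ the fraction of stubborn individuals, $m_0^{S,j}$ the mean opinion of stubborn individuals at level $h_j$, $p$ the probability that a lower-ranked individual convinces a higher-ranked one. *)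

From HB Require Import structures.
From mathcomp Require Import all_boot all_order all_algebra.
From mathcomp Require Import all_classical all_reals all_analysis.
Set Implicit Arguments. Unset Strict Implicit. Unset Printing Implicit Defensive.
Import Order.TTheory GRing.Theory Num.Theory.
Import numFieldNormedType.Exports.
Local Open Scope classical_set_scope.
Local Open Scope ring_scope.

(* Indices j = 1..N are represented by 'I_N
   (0-based, same order). *)

Section Defs.
Variables (R : realType) (N : nat).

Definition intm (mu : probability R R) (phi : R -> R) : R :=
  Rintegral mu `[-1, 1] phi.

Definition f0w (alpha : R) (fS fNS : 'I_N -> R) (j : 'I_N) : R :=
  alpha * fS j + (1 - alpha) * fNS j.

Definition f0tail (alpha : R) (fS fNS : 'I_N -> R) (i : 'I_N) : R :=
  \sum_(j < N | (i <= j)%N) f0w alpha fS fNS j.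

Definition mNS (f : 'I_N -> R -> probability R R) (j : 'I_N) (t : R) : R :=
  intm (f j t) id.

Definition mtot (alpha : R) (fS fNS mS : 'I_N -> R)
  (f : 'I_N -> R -> probability R R) (t : R) : R :=
  alpha * (\sum_(j < N) fS j * mS j)
  + (1 - alpha) * (\sum_(j < N) fNS j * mNS f j t).

Definition beta (alpha : R) (fS fNS mS : 'I_N -> R)
  (f : 'I_N -> R -> probability R R) (i : 'I_N) (t : R) : R :=
  alpha * (\sum_(j < N | (i <= j)%N) fS j * mS j)
  + (1 - alpha) * (\sum_(j < N | (i <= j)%N) fNS j * mNS f j t).

Definition Amat (p alpha : R) (fS fNS : 'I_N -> R) : 'M[R]_N :=
  \matrix_(i, j)
    if i == j then (1 - alpha) * fNS i - (p + (1 - p) * f0tail alpha fS fNS i)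
    else (1 - alpha) * (p + (1 - p) * ((i <= j)%N)%:R) * fNS j.

Definition Bvec (p alpha : R) (fS mS : 'I_N -> R) : 'cV[R]_N :=
  \col_i (alpha * \sum_(j < N) mS j * (p + (1 - p) * ((i <= j)%N)%:R) * fS j).

End Defs.

From HB Require Import structures.
From mathcomp Require Import all_boot all_order all_algebra.
From mathcomp Require Import all_classical all_reals all_analysis.
From mathcomp Require Import ring lra.
Import Order.TTheory GRing.Theory Num.Theory.
Import numFieldNormedType.Exports.
Local Open Scope classical_set_scope.
Local Open Scope ring_scope.

(* Testing the weak formulation against [w] and [w ^ 2] yields closed ODEs for the
   mean [m_i] and the second moment of each non-stubborn population.  The means solve
   [m' = A m + B], where [A] is a nonnegative coupling matrix minus a diagonal of
   relaxation rates, strictly diagonally dominant with margin [p * alpha]: hence [A] is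
   invertible and a sup-norm contraction argument sends [m] to [- A^-1 B].  The
   variances solve [V_i' = - 2 c_i V_i], so they vanish at infinity.  The second moment
   about [m_inf,i] therefore tends to 0, which forces weak convergence to the Dirac mass
   at [m_inf,i]. *)

Section within_continuity.
Context {T : topologicalType} {R : numFieldType} (A : set T).

Lemma within_continuous_cst (c : R) : {within A, continuous (fun _ : T => c)}.
Proof. by apply: continuous_subspaceT => x; exact: cvg_cst. Qed.

Lemma within_continuous_id : {within A, continuous (@id T)}.
Proof. by apply: continuous_subspaceT => x; exact: cvg_id. Qed.

Lemma within_continuousM (g h : T -> R) :
  {within A, continuous g} -> {within A, continuous h} ->
  {within A, continuous (fun t => g t * h t)}.
Proof. by move=> cg ch x; apply: cvgM; [exact: cg | exact: ch]. Qed.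

Lemma within_continuous_sum (I : Type) (r : seq I) (P : pred I) (F : I -> T -> R) :
  (forall i, {within A, continuous (F i)}) ->
  {within A, continuous (fun t => \sum_(i <- r | P i) F i t)}.
Proof.
move=> cF; elim: r => [|i r IH].
  by under eq_fun do rewrite big_nil; exact: within_continuous_cst.
under eq_fun do rewrite big_cons.
case: (P i); last exact: IH.
exact: (within_continuousD (cF i) IH).
Qed.

End within_continuity.

Section segment_integral.
Context {R : realType} (mu : probability R R).

Let cid : {within `[-1, 1], continuous (@id R)}.
Proof. exact: within_continuous_id. Qed.

Let ccst (k : R) : {within `[-1, 1], continuous (fun _ : R => k)}.
Proof. exact: within_continuous_cst. Qed.

Lemma intm_integrable (g : R -> R) : {within `[-1, 1], continuous g} ->
  mu.-integrable `[-1, 1]%classic (EFin \o g).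
Proof.
move=> cg; apply: measurable_bounded_integrable => //.
- by apply: (le_lt_trans (probability_le1 _ _)); rewrite ?ltry.
- exact: measurable_realfun.subspace_continuous_measurable_fun.
have [M [Mr HM]] := compact_bounded (continuous_compact cg (@segment_compact R (-1) 1)).
by exists M; split => // y My x Ax; apply: (HM y My); exists x.
Qed.

Lemma intmD (g h : R -> R) :
  {within `[-1, 1], continuous g} -> {within `[-1, 1], continuous h} ->
  intm mu (fun w => g w + h w) = intm mu g + intm mu h.
Proof. by move=> cg ch; rewrite /intm RintegralD //; exact: intm_integrable. Qed.

Lemma intmZ (k : R) (g : R -> R) : {within `[-1, 1], continuous g} ->
  intm mu (fun w => k * g w) = k * intm mu g.
Proof. by move=> cg; rewrite /intm RintegralZl //; exact: intm_integrable. Qed.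

Lemma intm_le (g h : R -> R) :
  {within `[-1, 1], continuous g} -> {within `[-1, 1], continuous h} ->
  (forall w, -1 <= w <= 1 -> g w <= h w) -> intm mu g <= intm mu h.
Proof. by move=> cg ch gh; apply: le_Rintegral => //; exact: intm_integrable. Qed.

Lemma norm_intm_le (g : R -> R) : {within `[-1, 1], continuous g} ->
  `|intm mu g| <= intm mu (fun w => `|g w|).
Proof. by move=> cg; apply: le_normr_Rintegral => //; exact: intm_integrable. Qed.

Hypothesis mu_segment : mu `[-1, 1]%classic = 1%E.

Lemma intm_cst (c : R) : intm mu (fun _ => c) = c.
Proof.
have mu1 : fine (mu `[-1, 1]%classic) = 1 by rewrite mu_segment.
by rewrite /intm Rintegral_cst // -[RHS]mulr1; congr (_ * _); exact: mu1.
Qed.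

Lemma intm_quadratic (a b c : R) :
  intm mu (fun w => a + b * w + c * (w * w)) =
  a + b * intm mu id + c * intm mu (fun w => w * w).
Proof.
have csq : {within `[-1, 1], continuous (fun w : R => w * w)}.
  exact: within_continuousM.
rewrite intmD; last 2 first.
- by apply: within_continuousD => //; exact: within_continuousM.
- exact: within_continuousM.
by rewrite intmD ?intm_cst ?intmZ //; exact: within_continuousM.
Qed.

Lemma intm_centered_sq (a : R) :
  intm mu (fun w => (w - a) * (w - a)) =
  intm mu (fun w => w * w) - 2 * a * intm mu id + a * a.
Proof.
have -> : (fun w => (w - a) * (w - a)) = (fun w => a * a + (- 2 * a) * w + 1 * (w * w)).
  by apply/funext => w; ring.
by rewrite intm_quadratic; ring.
Qed.

Lemma intm_centered_sq_ge0 (a : R) : 0 <= intm mu (fun w => (w - a) * (w - a)).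
Proof.
have cq : {within `[-1, 1], continuous (fun w : R => (w - a) * (w - a))}.
  by apply: within_continuousM; apply: within_continuousB.
rewrite -(intm_cst 0); apply: intm_le => // w _.
by rewrite -expr2 sqr_ge0.
Qed.

End segment_integral.

Section real_analysis.
Context {R : realType}.

Lemma expR_mul_nincr (w w' : R -> R) (k T : R) :
  (forall t, T <= t -> is_derive t 1 w (w' t)) ->
  (forall t, T <= t -> w' t <= - k * w t) ->
  forall t, T <= t -> expR (k * t) * w t <= expR (k * T) * w T.
Proof.
move=> dw w'le t tT.
have dv s : T <= s ->
    is_derive s 1 (fun u => expR (k * u) * w u) (expR (k * s) * (w' s + k * w s)).
  move=> sT; have dexp : is_derive s 1 (fun u => expR (k * u)) (expR (k * s) * k).
    apply: (@is_derive1_comp _ expR (fun u => k * u)).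
    exact: is_derive_eq (is_deriveZ k (is_derive_id s 1)) (mulr1 k).
  apply: is_derive_eq (is_deriveM dexp (dw s sT)) _.
  by rewrite /GRing.scale /=; ring.
apply: (@ler0_derive1_nincry _ (fun u => expR (k * u) * w u) T) => // [s|s|].
- by rewrite in_itv /= andbT => /ltW /dv /(@ex_derive R).
- rewrite in_itv /= andbT => /ltW sT; rewrite derive1E (@derive_val _ _ _ _ _ _ _ (dv s sT)).
  rewrite pmulr_rle0 ?expR_gt0 //; have := w'le s sT; lra.
- apply: derivable_within_continuous => s.
  by rewrite in_itv /= andbT => /dv /(@ex_derive R).
Qed.

Lemma gronwall_eventually_le (w w' : R -> R) (k T : R) : 0 < k ->
  (forall t, T <= t -> is_derive t 1 w (w' t)) ->
  (forall t, T <= t -> w' t <= - k * w t) ->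
  forall e, 0 < e -> \forall t \near +oo, w t <= e.
Proof.
move=> k0 dw w'le e e0; pose C := `|expR (k * T) * w T|.
near=> t.
have tT : T <= t by near: t; apply: nbhs_pinfty_ge; rewrite num_real.
have tC : C / (k * e) <= t by near: t; apply: nbhs_pinfty_ge; rewrite num_real.
have ekt : 0 < expR (k * t) := expR_gt0 _.
have wC : w t <= C / expR (k * t).
  rewrite ler_pdivlMr // mulrC; apply: le_trans (ler_norm _); rewrite /C.
  exact: expR_mul_nincr.
apply: (le_trans wC); rewrite ler_pdivrMr //.
apply: (le_trans _ (ler_wpM2l (ltW e0) (expR_ge1Dx (k * t)))).
move: tC; rewrite ler_pdivrMr ?mulr_gt0 // => tC.
have : 0 <= C := normr_ge0 _.
nra.
Unshelve. all: by end_near.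
Qed.

Lemma is_derive_integral_equation (F G : R -> R) (a : R) :
  {within [set t | a <= t], continuous G} ->
  (forall t, a <= t -> F t = F a + Rintegral lebesgue_measure `[a, t]%classic G) ->
  forall t, a < t -> is_derive t 1 F (G t).
Proof.
move=> cG HF t at_.
have cGt : {for t, continuous G}.
  have sub : `]a, +oo[%classic `<=` [set s | a <= s].
    by move=> s /=; rewrite in_itv /= andbT => /ltW.
  have := continuous_subspaceW sub cG.
  rewrite continuous_open_subspace; last exact: interval_open.
  by apply; rewrite inE /= in_itv /= andbT.
have cGat : {within `[a, t + 1], continuous G}.
  by apply: continuous_subspaceW cG => s /=; rewrite in_itv /= => /andP[].
have t_lt : t < t + 1 by rewrite ltrDl.
have [dI dIE] := @continuous_FTC1_closed R G a t (t + 1) t_lt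
  (continuous_compact_integrable (@segment_compact R a (t + 1)) cGat) at_ cGt.
have dFa : is_derive t 1 (fun s => F a + \int[lebesgue_measure]_(u in `[a, s]) G u) (G t).
  apply: is_derive_eq (is_deriveD (is_derive_cst (F a) t 1) (DeriveDef dI _)) _.
  - by rewrite -derive1E; exact: dIE.
  - by rewrite add0r.
apply: near_eq_is_derive dFa; near=> s; rewrite [RHS]HF //; apply: ltW.
by near: s; exact: lt_nbhsr.
Unshelve. all: by end_near.
Qed.

End real_analysis.

Section diagonal_dominance.
Context {R : realFieldType} {n : nat} (E : 'I_n -> 'I_n -> R) (c : 'I_n -> R) (a : R).
Hypothesis a_gt0 : 0 < a.
Hypothesis E_ge0 : forall j k, 0 <= E j k.
Hypothesis row_dom : forall j, \sum_(k < n) E j k + a <= c j.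

Lemma dominated_sum_le (x : 'I_n -> R) (b : R) (j : 'I_n) : 0 <= b ->
  (forall k, `|x k| <= b) -> `|\sum_(k < n) E j k * x k| <= (c j - a) * b.
Proof.
move=> b0 xb; apply: (le_trans (ler_norm_sum _ _ _)).
apply: (@le_trans _ _ (\sum_(k < n) E j k * b)).
  by apply: ler_sum => k _; rewrite normrM ger0_norm // ler_wpM2l.
by rewrite -mulr_suml ler_wpM2r // lerBrDr.
Qed.

Lemma sum_dominant_row (x : 'I_n -> R) (j : 'I_n) :
  \sum_(k < n) (E j k - (j == k)%:R * c j) * x k = \sum_(k < n) E j k * x k - c j * x j.
Proof.
rewrite (bigD1 j) //= [in RHS](bigD1 j) //= eqxx mul1r.
under eq_bigr => k kj do rewrite eq_sym (negbTE kj) mul0r subr0.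
by rewrite mulrBl addrAC.
Qed.

Lemma dominant_unitmx : \matrix_(j, k) (E j k - (j == k)%:R * c j) \in unitmx.
Proof.
set M := \matrix_(j, k) _.
rewrite unitmxE unitfE -det_tr; apply/negP => /det0P[v vn0 vM].
have [k0 _] : exists k, v ord0 k != 0.
  apply/existsP; apply: contraNT vn0 => /existsPn v0; apply/eqP/rowP => k.
  by rewrite mxE; apply/eqP; move: (v0 k); rewrite negbK.
have [j0 _ vmax] := @arg_maxP _ _ _ k0 xpredT (fun j => `|v ord0 j|) isT.
have vj0 : \sum_(k < n) E j0 k * v ord0 k = c j0 * v ord0 j0.
  apply/eqP; rewrite -subr_eq0 -sum_dominant_row; apply/eqP.
  rewrite [RHS](_ : 0 = (v *m M^T) ord0 j0); last by rewrite vM mxE.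
  by rewrite mxE; apply: eq_bigr => k _; rewrite !mxE mulrC.
have := @dominated_sum_le (fun k => v ord0 k) _ j0 (normr_ge0 _) (fun k => vmax k isT).
have c0 : 0 <= c j0.
  by apply: le_trans (row_dom j0); rewrite addr_ge0 ?sumr_ge0 // ltW.
rewrite vj0 normrM ger0_norm // => le_ca.
have vj00 : `|v ord0 j0| = 0.
  by apply/eqP; rewrite eq_le normr_ge0 andbT -(pmulr_rle0 _ a_gt0); lra.
move/eqP: vn0; apply; apply/rowP => k; rewrite !mxE.
by apply/normr0_eq0/eqP; rewrite eq_le normr_ge0 andbT -vj00; exact: vmax.
Qed.

End diagonal_dominance.

Lemma dissipation_le {R : realFieldType} (u r c b : R) : 0 <= c -> `|r| <= c * b ->
  2 * u * (r - c * u) <= - c * (u * u - b * b).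
Proof.
move=> c0 rb.
have ur : u * r <= `|u| * (c * b).
  by rewrite (le_trans (ler_norm _)) // normrM ler_wpM2l.
have uu : `|u| * `|u| = u * u by rewrite -normrM ger0_norm // -expr2 sqr_ge0.
have : 0 <= c * ((`|u| - b) * (`|u| - b)) by rewrite mulr_ge0 // -expr2 sqr_ge0.
nra.
Qed.

Section cooperative_system.
Context {R : realType} {n : nat} (E : 'I_n -> 'I_n -> R) (c : 'I_n -> R) (a : R).
Context (x : 'I_n -> R -> R).
Hypothesis a_gt0 : 0 < a.
Hypothesis E_ge0 : forall j k, 0 <= E j k.
Hypothesis row_dom : forall j, \sum_(k < n) E j k + a <= c j.
Hypothesis c_le1 : forall j, c j <= 1.
Hypothesis x_derive : forall j (t : R), 0 < t ->
  is_derive t 1 (x j) (\sum_(k < n) E j k * x k t - c j * x j t).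

Let a_le_c j : a <= c j.
Proof. by apply: le_trans (row_dom j); rewrite lerDr sumr_ge0. Qed.

Lemma cooperative_eventually_contract (b : R) : 0 <= b ->
  (\forall t \near +oo, forall k, `|x k t| <= b) ->
  \forall t \near +oo, forall k, `|x k t| <= (1 - a / 2) * b.
Proof.
rewrite le_eqVlt => /predU1P[<- | b0] xb; first by rewrite mulr0.
apply: filter_forall => j.
have [M [_ xbM]] := xb.
pose T : R := `|M| + 1.
have T0 : 0 < T by rewrite ltr_pwDr.
have TM : M < T by rewrite (le_lt_trans (ler_norm M)) // ltrDl.
(* Since [|sum_k E j k * x k t| <= (c j - a) b <= c j r], the quantity
   [w = x_j ^ 2 - r ^ 2] satisfies [w' <= - c j * w] (lemma [dissipation_le]). *)
pose r := (1 - a) * b.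
pose w t := x j t * x j t - r * r.
have dw (t : R) : T <= t ->
    is_derive t 1 w (2 * x j t * (\sum_(k < n) E j k * x k t - c j * x j t)).
  move=> tT; have dx := x_derive j t (lt_le_trans T0 tT).
  apply: is_derive_eq (is_deriveB (is_deriveM dx dx) (is_derive_cst (r * r) t 1)) _.
  by rewrite /GRing.scale /=; ring.
have w'le (t : R) : T <= t ->
    2 * x j t * (\sum_(k < n) E j k * x k t - c j * x j t) <= - c j * w t.
  move=> tT; apply: dissipation_le; first exact: le_trans (ltW a_gt0) (a_le_c j).
  have xtb := xbM t (lt_le_trans TM tT).
  have := @dominated_sum_le _ _ E c a E_ge0 row_dom (fun k => x k t) b j (ltW b0) xtb.
  move/le_trans; apply.
  have : 0 <= a * b * (1 - c j) by rewrite !mulr_ge0 ?subr_ge0 ?c_le1 // ltW.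
  rewrite /r; nra.
have e0 : 0 < ((1 - a / 2) ^+ 2 - (1 - a) ^+ 2) * (b * b).
  apply: mulr_gt0; last exact: mulr_gt0.
  have a1 : a <= 1 := le_trans (a_le_c j) (c_le1 j).
  have : 0 < a * (4 - 3 * a) by rewrite mulr_gt0 // subr_gt0; lra.
  rewrite !expr2; lra.
have := @gronwall_eventually_le _ w _ (c j) T (lt_le_trans a_gt0 (a_le_c j)) dw w'le _ e0.
apply: filter_app; near=> t => wt.
have ab0 : 0 <= (1 - a / 2) * b.
  by rewrite mulr_ge0 ?ltW //; have := a_le_c j; have := c_le1 j; lra.
have uu : `|x j t| * `|x j t| = x j t * x j t.
  by rewrite -normrM ger0_norm // -expr2 sqr_ge0.
have := normr_ge0 (x j t); move: wt; rewrite /w /r; nra.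
Unshelve. all: by end_near.
Qed.

Lemma cooperative_cvg0 (K : R) : 0 <= K ->
  (\forall t \near +oo, forall k, `|x k t| <= K) ->
  forall j, x j t @[t --> +oo] --> 0.
Proof.
move=> K0 xK j; pose th : R := 1 - a / 2.
have a1 : a <= 1 := le_trans (a_le_c j) (c_le1 j).
have th01 : 0 <= th < 1.
  by rewrite /th ltrBlDr ltrDl divr_gt0 // andbT; lra.
have thK m : \forall t \near +oo, forall k, `|x k t| <= th ^+ m * K.
  elim: m => [|m IH]; first by rewrite expr0 mul1r.
  rewrite exprS -mulrA; apply: cooperative_eventually_contract IH.
  by rewrite mulr_ge0 // exprn_ge0; case/andP: th01.
apply/cvgrPdist_le => e e0.
have th1 : `|th| < 1 by rewrite ger0_norm //; case/andP: th01.
move/cvgrPdist_le : (cvg_geometric K th1) => /(_ e e0)[m _ thm].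
have := thm m (leqnn m); rewrite /= sub0r normrN /geometric /= => thmK.
apply: filter_app (thK m); near=> t => xt.
rewrite sub0r normrN (le_trans (xt j)) // (le_trans (ler_norm _)) // mulrC.
Unshelve. all: by end_near.
Qed.

End cooperative_system.

Section dirac_limit.
Context {R : realType}.

Lemma continuous_quadratic_bound (phi : R -> R) (c e : R) :
  {within `[-1, 1], continuous phi} -> -1 <= c <= 1 -> 0 < e ->
  exists2 K, 0 <= K & forall w, -1 <= w <= 1 ->
    `|phi w - phi c| <= e + K * ((w - c) * (w - c)).
Proof.
move=> cphi cI e0.
have [M [_ HM]] := compact_bounded (continuous_compact cphi (@segment_compact R (-1) 1)).
have phiM w : -1 <= w <= 1 -> `|phi w| <= `|M| + 1.
  move=> wI; apply: HM; first by rewrite (le_lt_trans (ler_norm M)) ?ltrDl.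
  by exists w => //; rewrite /= in_itv.
have [d d0 phid] : exists2 d, 0 < d &
    forall w, -1 <= w <= 1 -> `|c - w| < d -> `|phi c - phi w| < e.
  have cI' : `[-1, 1]%classic c by rewrite /= in_itv.
  move/cvgrPdist_lt : (cphi c) => /(_ e e0) /(nbhs_subspace_ex _ cI') [V nV UV].
  move/nbhs_ballP : nV => [d d0 Hd]; exists d => // w wI cw.
  have : (V `&` `[-1, 1]%classic) w by split; [exact: Hd | rewrite /= in_itv].
  by rewrite -UV => -[].
exists (2 * (`|M| + 1) / (d * d)); first by rewrite divr_ge0 ?mulr_ge0 // ltW.
move=> w wI; have sq0 : 0 <= (w - c) * (w - c) by rewrite -expr2 sqr_ge0.
have [cw|cw] := ltP `|c - w| d.
  rewrite distrC (le_trans (ltW (phid w wI cw))) // lerDl mulr_ge0 //.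
  by rewrite divr_ge0 ?mulr_ge0 // ltW.
have dwc : d * d <= (w - c) * (w - c).
  have <- : `|c - w| * `|c - w| = (w - c) * (w - c).
    by rewrite -normrM ger0_norm; [ring | rewrite -expr2 sqr_ge0].
  by rewrite ler_pM // ltW.
have far : 2 * (`|M| + 1) <= 2 * (`|M| + 1) / (d * d) * ((w - c) * (w - c)).
  rewrite mulrAC -mulrA ler_peMr ?mulr_ge0 //.
  by rewrite ler_pdivlMr ?mulr_gt0 // mul1r.
apply: (le_trans (ler_normB _ _)).
have := phiM w wI; have := phiM c cI; lra.
Qed.

Lemma intm_cvg_dirac (T : Type) (G : set_system T) {FG : Filter G}
    (mu : T -> probability R R) (c : R) (phi : R -> R) :
  (\forall t \near G, mu t `[-1, 1]%classic = 1%E) ->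
  {within `[-1, 1], continuous phi} -> -1 <= c <= 1 ->
  intm (mu t) (fun w => (w - c) * (w - c)) @[t --> G] --> 0 ->
  intm (mu t) phi @[t --> G] --> phi c.
Proof.
move=> mu1 cphi cI q0; apply/cvgrPdist_le => e e0.
have [K K0 phiK] :=
  @continuous_quadratic_bound phi c (e / 2) cphi cI (divr_gt0 e0 (ltr0n _ 2)).
have eK : 0 < e / (2 * (K + 1)) by rewrite divr_gt0 // mulr_gt0 // ltr_pwDr.
move/cvgrPdist_le : q0 => /(_ _ eK); apply: filter_app2 mu1; near=> t => mt qt.
have cst (k : R) : {within `[-1, 1], continuous (fun _ : R => k)}.
  exact: within_continuous_cst.
have cq : {within `[-1, 1], continuous (fun w : R => (w - c) * (w - c))}.
  apply: within_continuousM; apply: within_continuousB => //;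
  exact: within_continuous_id.
have cphic : {within `[-1, 1], continuous (fun w => phi w - phi c)}.
  by apply: within_continuousD.
have -> : phi c - intm (mu t) phi = - intm (mu t) (fun w => phi w - phi c).
  by rewrite intmD ?cst // intm_cst //; ring.
rewrite normrN (le_trans (norm_intm_le _ _ cphic)) //.
apply: (@le_trans _ _ (intm (mu t) (fun w => e / 2 + K * ((w - c) * (w - c))))).
  apply: intm_le => //.
  - by move=> w; apply: cvg_norm; exact: cphic.
  - by apply: within_continuousD => //; apply: within_continuousM.
rewrite intmD ?intm_cst ?intmZ //; last by apply: within_continuousM.
move: qt; rewrite sub0r normrN => qt.
have := ler_wpM2l K0 (le_trans (ler_norm _) qt).
have : K * (e / (2 * (K + 1))) <= e / 2.
  have K1 : 0 < K + 1 by rewrite ltr_pwDr.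
  have -> : K * (e / (2 * (K + 1))) = e / 2 * (K / (K + 1)).
    by field; exact: lt0r_neq0.
  by rewrite ler_piMr ?divr_ge0 ?ltW // ltr_pdivrMr // mul1r ltrDl.
lra.
Unshelve. all: by end_near.
Qed.

End dirac_limit.

Section opinion_model.
Context {R : realType} {n : nat} (p alpha : R) (fS fNS mS : 'I_n -> R).

Definition coupling (j k : 'I_n) : R :=
  (1 - alpha) * (p + (1 - p) * ((j <= k)%N)%:R) * fNS k.

Definition relaxation (j : 'I_n) : R := p + (1 - p) * f0tail alpha fS fNS j.

Lemma Amat_coupling :
  Amat p alpha fS fNS = \matrix_(j, k) (coupling j k - (j == k)%:R * relaxation j).
Proof.
apply/matrixP => j k; rewrite !mxE /coupling /relaxation.
by case: eqP => [->|_]; rewrite ?leqnn /=; ring.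
Qed.

Lemma sum_split_tail (u v : R) (F : 'I_n -> R) (j : 'I_n) :
  \sum_(k < n) (u + v * ((j <= k)%N)%:R) * F k =
  u * \sum_(k < n) F k + v * \sum_(k < n | (j <= k)%N) F k.
Proof.
rewrite [X in _ = _ + _ * X]big_mkcond !mulr_sumr -big_split; apply: eq_bigr => k _ /=.
by case: (j <= k)%N => /=; ring.
Qed.

Lemma mean_drift_affine (f : 'I_n -> R -> probability R R) (j : 'I_n) (t : R) :
  p * mtot alpha fS fNS mS f t + (1 - p) * beta alpha fS fNS mS f j t
    - relaxation j * mNS f j t
  = \sum_(k < n) Amat p alpha fS fNS j k * mNS f k t + Bvec p alpha fS mS j ord0.
Proof.
rewrite Amat_coupling; under eq_bigr do rewrite mxE.
rewrite sum_dominant_row mxE.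
have -> : \sum_(k < n) coupling j k * mNS f k t =
    (1 - alpha) * \sum_(k < n) (p + (1 - p) * ((j <= k)%N)%:R) * (fNS k * mNS f k t).
  by rewrite mulr_sumr; apply: eq_bigr => k _; rewrite /coupling; ring.
have -> : \sum_(k < n) mS k * (p + (1 - p) * ((j <= k)%N)%:R) * fS k =
    \sum_(k < n) (p + (1 - p) * ((j <= k)%N)%:R) * (fS k * mS k).
  by apply: eq_bigr => k _; ring.
by rewrite !sum_split_tail /mtot /beta; ring.
Qed.

Hypothesis p01 : 0 < p < 1.
Hypothesis alpha01 : 0 < alpha <= 1.
Hypothesis fS_ge0 : forall j, 0 <= fS j.
Hypothesis fNS_ge0 : forall j, 0 <= fNS j.
Hypothesis fS_sum1 : \sum_(j < n) fS j = 1.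
Hypothesis fNS_sum1 : \sum_(j < n) fNS j = 1.

Lemma coupling_ge0 (j k : 'I_n) : 0 <= coupling j k.
Proof.
case/andP: p01 => p0 p1; case/andP: alpha01 => _ a1.
rewrite /coupling; apply: mulr_ge0 => //; apply: mulr_ge0; first by rewrite subr_ge0.
by rewrite addr_ge0 ?mulr_ge0 ?subr_ge0 // ltW.
Qed.

Lemma sum_tail_le (F : 'I_n -> R) (j : 'I_n) : (forall k, 0 <= F k) ->
  0 <= \sum_(k < n | (j <= k)%N) F k <= \sum_(k < n) F k.
Proof.
move=> F0; rewrite sumr_ge0 //= [leRHS](bigID (fun k : 'I_n => (j <= k)%N)) /=.
by rewrite lerDl sumr_ge0.
Qed.

Lemma f0tail_split (j : 'I_n) : f0tail alpha fS fNS j =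
  alpha * \sum_(k < n | (j <= k)%N) fS k + (1 - alpha) * \sum_(k < n | (j <= k)%N) fNS k.
Proof. by rewrite /f0tail /f0w big_split /= -!mulr_sumr. Qed.

Lemma coupling_row_dom (j : 'I_n) : \sum_(k < n) coupling j k + p * alpha <= relaxation j.
Proof.
have -> : \sum_(k < n) coupling j k =
    (1 - alpha) * \sum_(k < n) (p + (1 - p) * ((j <= k)%N)%:R) * fNS k.
  by rewrite mulr_sumr; apply: eq_bigr => k _; rewrite /coupling mulrA.
rewrite sum_split_tail fNS_sum1 /relaxation f0tail_split.
have /andP[tS0 _] := sum_tail_le fS j fS_ge0.
case/andP: p01 => p0 p1; case/andP: alpha01 => a0 a1.
have : 0 <= (1 - p) * alpha * \sum_(k < n | (j <= k)%N) fS k.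
  by rewrite mulr_ge0 ?sumr_ge0 // mulr_ge0 ?subr_ge0 // ltW.
lra.
Qed.

Lemma relaxation_ge (j : 'I_n) : p * alpha <= relaxation j.
Proof.
apply: le_trans (coupling_row_dom j); rewrite lerDr sumr_ge0 // => k _.
exact: coupling_ge0.
Qed.

Lemma relaxation_le1 (j : 'I_n) : relaxation j <= 1.
Proof.
have /andP[_ tS] := sum_tail_le fS j fS_ge0.
have /andP[_ tNS] := sum_tail_le fNS j fNS_ge0.
rewrite fS_sum1 in tS; rewrite fNS_sum1 in tNS.
case/andP: p01 => p0 p1; case/andP: alpha01 => a0 a1.
have tail1 : f0tail alpha fS fNS j <= 1.
  rewrite f0tail_split; have := ler_wpM2l (ltW a0) tS.
  have := ler_wpM2l (_ : 0 <= 1 - alpha) tNS; rewrite subr_ge0 => /(_ a1); lra.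
have := ler_wpM2l (_ : 0 <= 1 - p) tail1; rewrite subr_ge0 => /(_ (ltW p1)).
rewrite /relaxation; lra.
Qed.

Lemma Amat_unitmx : Amat p alpha fS fNS \in unitmx.
Proof.
have pa : 0 < p * alpha.
  by case/andP: p01 => p0 _; case/andP: alpha01 => a0 _; exact: mulr_gt0.
by rewrite Amat_coupling; apply: dominant_unitmx pa coupling_ge0 coupling_row_dom.
Qed.

End opinion_model.

Section opinion_dynamics.
Context {R : realType} {n : nat} {p alpha : R} {fS fNS mS : 'I_n -> R}.
Context {f : 'I_n -> R -> probability R R}.
Hypothesis f_segment : forall i t, 0 <= t -> f i t `[-1, 1]%classic = 1%E.
Hypothesis f_cont : forall i (phi : R -> R), {within `[-1, 1], continuous phi} ->
  {within [set t : R | 0 <= t], continuous (fun t => intm (f i t) phi)}.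
Hypothesis f_weak : forall i t (phi : R -> R), 0 <= t ->
  (forall x, derivable phi x 1) -> continuous (derive1 phi) ->
  intm (f i t) phi =
    intm (f i 0) phi
    + Rintegral lebesgue_measure `[0, t]
        (fun s => intm (f i s) (fun w =>
           derive1 phi w *
           (p * (mtot alpha fS fNS mS f s - w)
            + (1 - p) * (beta alpha fS fNS mS f i s
                         - f0tail alpha fS fNS i * w)))).

Local Notation m := (mNS f).
Local Notation m2 j t := (intm (f j t) (fun w => w * w)).
Local Notation inflow j s :=
  (p * mtot alpha fS fNS mS f s + (1 - p) * beta alpha fS fNS mS f j s).
Local Notation c := (relaxation p alpha fS fNS).

Lemma weak_form_is_derive (j : 'I_n) (t : R) (phi dphi : R -> R) :
  0 <= t -> (forall x : R, is_derive x 1 phi (dphi x)) -> continuous dphi ->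
  intm (f j t) phi = intm (f j 0) phi +
    Rintegral lebesgue_measure `[0, t]%classic
      (fun s => intm (f j s) (fun w => dphi w * (inflow j s - c j * w))).
Proof.
move=> t0 dphi_is cdphi.
have dphiE : derive1 phi = dphi.
  by apply/funext => x; rewrite derive1E (@derive_val _ _ _ _ _ _ _ (dphi_is x)).
rewrite f_weak ?dphiE //; congr (_ + _); apply: eq_Rintegral => s _.
by congr intm; apply/funext => w; rewrite /relaxation; ring.
Qed.

Lemma mean_integral_eq (j : 'I_n) (t : R) : 0 <= t ->
  m j t = m j 0 + Rintegral lebesgue_measure `[0, t]%classic
                    (fun s => inflow j s - c j * m j s).
Proof.
move=> t0; rewrite /mNS (@weak_form_is_derive j t id (fun=> 1)) //; last first.
  by move=> x; exact: cvg_cst.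
congr (_ + _); apply: eq_Rintegral => s; rewrite inE /= in_itv /= => /andP[s0 _].
have -> : (fun w => 1 * (inflow j s - c j * w)) =
    (fun w => inflow j s + (- c j) * w + 0 * (w * w)) by apply/funext => w; ring.
by rewrite intm_quadratic ?f_segment //; ring.
Qed.

Lemma second_moment_integral_eq (j : 'I_n) (t : R) : 0 <= t ->
  m2 j t = m2 j 0 + Rintegral lebesgue_measure `[0, t]%classic
                      (fun s => 2 * inflow j s * m j s - 2 * c j * m2 j s).
Proof.
move=> t0.
have dsq (x : R) : is_derive x 1 (fun w => w * w) (2 * x).
  apply: is_derive_eq (is_deriveM (is_derive_id x 1) (is_derive_id x 1)) _.
  by rewrite /GRing.scale /=; ring.
have c2 : continuous (fun w : R => 2 * w).
  by move=> x; apply: cvgM; [exact: cvg_cst | exact: cvg_id].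
rewrite (weak_form_is_derive j t _ _ t0 dsq c2); congr (_ + _).
apply: eq_Rintegral => s; rewrite inE /= in_itv /= => /andP[s0 _].
have -> : (fun w => 2 * w * (inflow j s - c j * w)) =
    (fun w => 0 + (2 * inflow j s) * w + (- 2 * c j) * (w * w)).
  by apply/funext => w; ring.
by rewrite intm_quadratic ?f_segment // /mNS; ring.
Qed.

Let nonneg := [set t : R | 0 <= t].

Let mean_continuous (j : 'I_n) : {within nonneg, continuous (m j)}.
Proof. exact/f_cont/within_continuous_id. Qed.

Let second_moment_continuous (j : 'I_n) :
  {within nonneg, continuous (fun t => m2 j t)}.
Proof. by apply/f_cont/within_continuousM; exact: within_continuous_id. Qed.

Let cst (k : R) : {within nonneg, continuous (fun _ : R => k)}.
Proof. exact: within_continuous_cst. Qed.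

Let inflow_continuous (j : 'I_n) : {within nonneg, continuous (fun t => inflow j t)}.
Proof.
have cS (P : pred 'I_n) (u : 'I_n -> R) :
    {within nonneg, continuous (fun s => \sum_(k < n | P k) u k * m k s)}.
  by apply: within_continuous_sum => k; apply: within_continuousM.
by apply: within_continuousD; apply: within_continuousM => //;
  apply: within_continuousD; apply: within_continuousM.
Qed.

Lemma mean_is_derive (j : 'I_n) (t : R) : 0 < t ->
  is_derive t 1 (m j) (inflow j t - c j * m j t).
Proof.
move: t; apply: is_derive_integral_equation (mean_integral_eq j).
by apply: within_continuousB => //; apply: within_continuousM.
Qed.

Lemma second_moment_is_derive (j : 'I_n) (t : R) : 0 < t ->
  is_derive t 1 (fun s => m2 j s) (2 * inflow j t * m j t - 2 * c j * m2 j t).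
Proof.
move: t; apply: is_derive_integral_equation (second_moment_integral_eq j).
by apply: within_continuousB; apply: within_continuousM => //; apply: within_continuousM.
Qed.

Lemma mean_in_segment (j : 'I_n) (t : R) : 0 <= t -> -1 <= m j t <= 1.
Proof.
move=> t0; have cid : {within `[-1, 1], continuous (@id R)}.
  exact: within_continuous_id.
have cseg (k : R) : {within `[-1, 1], continuous (fun _ : R => k)}.
  exact: within_continuous_cst.
apply/andP; split.
- by rewrite -(intm_cst _ (f_segment j t t0) (-1)); apply: intm_le => // w /andP[].
- by rewrite -(intm_cst _ (f_segment j t t0) 1); apply: intm_le => // w /andP[].
Qed.

Hypothesis p01 : 0 < p < 1.
Hypothesis alpha01 : 0 < alpha <= 1.
Hypothesis fS_ge0 : forall j, 0 <= fS j.
Hypothesis fNS_ge0 : forall j, 0 <= fNS j.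
Hypothesis fS_sum1 : \sum_(j < n) fS j = 1.
Hypothesis fNS_sum1 : \sum_(j < n) fNS j = 1.

Let pa_gt0 : 0 < p * alpha.
Proof. by case/andP: p01 => p0 _; case/andP: alpha01 => a0 _; exact: mulr_gt0. Qed.

Local Notation A := (Amat p alpha fS fNS).
Local Notation B := (Bvec p alpha fS mS).
Local Notation m_lim j := ((- (invmx A *m B)) j ord0).

Lemma mean_lim_equilibrium (j : 'I_n) : \sum_(k < n) A j k * m_lim k + B j ord0 = 0.
Proof.
have AmB : A *m (- (invmx A *m B)) = - B.
  by rewrite mulmxN mulKVmx //; exact: Amat_unitmx.
have := congr1 (fun M : 'cV[R]_n => M j ord0) AmB.
by rewrite /= [LHS]mxE [RHS]mxE => ->; rewrite addNr.
Qed.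

Lemma mean_cvg (j : 'I_n) : m j t @[t --> +oo] --> m_lim j.
Proof.
pose x (k : 'I_n) (t : R) := m k t - m_lim k.
have dx (k : 'I_n) (t : R) : 0 < t ->
    is_derive t 1 (x k) (\sum_(l < n) coupling p alpha fNS k l * x l t - c k * x k t).
  move=> t0; have dm := mean_is_derive k t t0.
  apply: is_derive_eq (is_deriveB dm (is_derive_cst (m_lim k) t 1)) _.
  have drift := mean_drift_affine p alpha fS fNS mS f k t.
  rewrite subr0; apply: etrans drift _.
  have -> : \sum_(l < n) A k l * m l t + B k ord0 = \sum_(l < n) A k l * x l t.
    rewrite /x; under [RHS]eq_bigr do rewrite mulrBr.
    by rewrite sumrB; have := mean_lim_equilibrium k; lra.
  by rewrite Amat_coupling; under eq_bigr do rewrite mxE; exact: sum_dominant_row.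
have xb : \forall t \near +oo, forall k, `|x k t| <= 1 + \sum_(l < n) `|m_lim l|.
  near=> t => k; have t0 : 0 <= t by near: t; apply: nbhs_pinfty_ge; rewrite num_real.
  rewrite (le_trans (ler_normB _ _)) // lerD //; first by rewrite ler_norml mean_in_segment.
  by rewrite (bigD1 k) //= lerDl sumr_ge0.
apply/subr_cvg0; apply: (@cooperative_cvg0 _ _ _ _ _ x pa_gt0 _ _ _ dx _ _ xb).
- exact: coupling_ge0.
- exact: coupling_row_dom.
- exact: relaxation_le1.
- by rewrite addr_ge0 // sumr_ge0.
Unshelve. all: by end_near.
Qed.

Lemma mean_lim_in_segment (j : 'I_n) : -1 <= m_lim j <= 1.
Proof.
have := @closed_cvg _ _ _ _ (m j) `[-1, 1]%classic
  (@interval_closed R (BLeft (-1)) (BRight 1) isT isT) _ _ (mean_cvg j).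
rewrite /= in_itv; apply; near=> t; rewrite /= in_itv; apply: mean_in_segment.
by near: t; apply: nbhs_pinfty_ge; rewrite num_real.
Unshelve. all: by end_near.
Qed.

Lemma variance_cvg0 (j : 'I_n) : m2 j t - m j t * m j t @[t --> +oo] --> 0.
Proof.
pose V t := m2 j t - m j t * m j t.
have cj : 0 < 2 * c j by rewrite mulr_gt0 // (lt_le_trans pa_gt0) // relaxation_ge.
have dV (t : R) : 1 <= t -> is_derive t 1 V (- (2 * c j) * V t).
  move=> t1; have t0 : 0 < t := lt_le_trans ltr01 t1.
  have dm := mean_is_derive j t t0.
  apply: is_derive_eq (is_deriveB (second_moment_is_derive j t t0) (is_deriveM dm dm)) _.
  by rewrite /V /GRing.scale /=; ring.
have V0 : \forall t \near +oo, 0 <= V t.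
  near=> t; have t0 : 0 <= t by near: t; apply: nbhs_pinfty_ge; rewrite num_real.
  have := intm_centered_sq_ge0 _ (f_segment j t t0) (mNS f j t).
  by rewrite intm_centered_sq ?f_segment // /V /mNS; lra.
apply/cvgrPdist_le => e e0.
have := @gronwall_eventually_le _ V _ (2 * c j) 1 cj dV (fun t _ => lexx _) _ e0.
apply: filter_app2 V0; near=> t => Vge0 Vle.
by rewrite sub0r normrN ger0_norm.
Unshelve. all: by end_near.
Qed.

Lemma centered_second_moment_cvg0 (j : 'I_n) :
  intm (f j t) (fun w => (w - m_lim j) * (w - m_lim j)) @[t --> +oo] --> 0.
Proof.
have split_var : {near +oo, (fun t => (m2 j t - m j t * m j t)
    + (m j t - m_lim j) * (m j t - m_lim j)) =1
    (fun t => intm (f j t) (fun w => (w - m_lim j) * (w - m_lim j)))}.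
  near=> t; have t0 : 0 <= t by near: t; apply: nbhs_pinfty_ge; rewrite num_real.
  by rewrite /= intm_centered_sq ?f_segment // /mNS; ring.
apply: cvg_trans (near_eq_cvg split_var) _.
rewrite -[0](addr0 0); apply: cvgD; first exact: variance_cvg0.
by rewrite -(mul0r 0); apply: cvgM; apply/subr_cvg0; exact: mean_cvg.
Unshelve. all: by end_near.
Qed.

End opinion_dynamics.

Theorem theorem4p6 (R : realType) (N : nat) (p alpha : R)
  (h fS fNS mS : 'I_N.+1 -> R)
  (f : 'I_N.+1 -> R -> probability R R) :
  0 < p < 1 ->
  0 < alpha <= 1 ->
  0 <= h ord0 ->
  (forall i j : 'I_N.+1, (i < j)%N -> h i < h j) ->
  h ord_max <= 1 ->
  (forall j, 0 <= fS j) -> \sum_(j < N.+1) fS j = 1 ->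
  (forall j, 0 <= fNS j) -> \sum_(j < N.+1) fNS j = 1 ->
  0 < f0w alpha fS fNS ord_max ->
  (forall j, -1 <= mS j <= 1) ->
  (* each f^{NS,i}(t) is a probability measure on [-1,1] *)
  (forall i t, 0 <= t -> f i t `[-1, 1]%classic = 1%E) ->
  (* weak continuity of t |-> f^{NS,i}(t) on [0,+oo) *)
  (forall i (phi : R -> R), {within `[-1, 1], continuous phi} ->
     {within [set t : R | 0 <= t], continuous (fun t => intm (f i t) phi)}) ->
  (* weak formulation of the dynamics, initial datum f^{NS,i}(0) *)
  (forall i t (phi : R -> R), 0 <= t ->
     (forall x, derivable phi x 1) -> continuous (derive1 phi) ->
     intm (f i t) phi =
       intm (f i 0) phi
       + Rintegral lebesgue_measure `[0, t]
           (fun s => intm (f i s) (fun w =>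
              derive1 phi w *
              (p * (mtot alpha fS fNS mS f s - w)
               + (1 - p) * (beta alpha fS fNS mS f i s
                            - f0tail alpha fS fNS i * w))))) ->
  Amat p alpha fS fNS \in unitmx /\
  (forall i (phi : R -> R), {within `[-1, 1], continuous phi} ->
     (fun t => intm (f i t) phi) @ +oo -->
       phi ((- (invmx (Amat p alpha fS fNS) *m Bvec p alpha fS mS)) i ord0)).
Proof.
move=> p01 alpha01 _ _ _ fS_ge0 fS_sum1 fNS_ge0 fNS_sum1 _ _ f_segment f_cont f_weak.
split; first exact: Amat_unitmx.
move=> i phi cphi; apply: intm_cvg_dirac cphi _ _.
- by near=> t; apply: f_segment; near: t; apply: nbhs_pinfty_ge; rewrite num_real.
- by apply: (mean_lim_in_segment f_segment f_cont f_weak).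
- by apply: (centered_second_moment_cvg0 f_segment f_cont f_weak).
Unshelve. all: by end_near.
Qed.
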